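(* Let $h_1,h_2:(0,\infty)\to\mathbb{R}$ be convex. Then (i) $\partial X(h_1,h_2)\setminus C(h_1,h_2)\subseteq\operatorname{supp}(h_2)$, and (ii) $\partial X(h_2,h_1)\setminus C(h_1,h_2)\subseteq\operatorname{supp}(h_1)$.
   Context: Boundaries are taken in the space $(0,\infty)$. $X(h_1,h_2):=\{x>0:h_1(x)<h_2(x)\}$. $\operatorname{supp}(h):=\{x>0:\text{for every open }U\ni x,\ h|_U\text{ is not affine}\}$. $C(h_1,h_2)$ is the set of simple crossing points: those $x>0$ for which there is $r>1$ with either $(xr^{-1},x)\subseteq X(h_1,h_2)$ and $(x,xr)\subseteq X(h_2,h_1)$, or $(xr^{-1},x)\subseteq X(h_2,h_1)$ and $(x,xr)\subseteq X(h_1,h_2)$. *)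

From Stdlib Require Export Reals.
Open Scope R_scope.

(* Functions (0,oo) -> R are modelled as R -> R; only values on (0,oo) matter. *)
Definition pos (x : R) : Prop := 0 < x.

Definition convex_pos (h : R -> R) : Prop :=
  forall x y t, 0 < x -> 0 < y -> 0 <= t <= 1 ->
    h (t * x + (1 - t) * y) <= t * h x + (1 - t) * h y.

Definition Xset (h1 h2 : R -> R) (x : R) : Prop := 0 < x /\ h1 x < h2 x.

(* Open subsets of the space (0,oo): traces U ∩ (0,oo) of open U ⊆ R. *)
Definition boundary_pos (A : R -> Prop) (x : R) : Prop :=
  0 < x /\
  forall U : R -> Prop, open_set U -> U x ->
    (exists y, U y /\ 0 < y /\ A y) /\ (exists y, U y /\ 0 < y /\ ~ A y).

Definition affine_on (h : R -> R) (D : R -> Prop) : Prop :=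
  exists a b, forall y, D y -> h y = a * y + b.

Definition supp (h : R -> R) (x : R) : Prop :=
  0 < x /\
  forall U : R -> Prop, open_set U -> U x ->
    ~ affine_on h (fun y => U y /\ 0 < y).

Definition Cset (h1 h2 : R -> R) (x : R) : Prop :=
  0 < x /\
  exists r, 1 < r /\
   (((forall y, x / r < y < x -> Xset h1 h2 y) /\
     (forall y, x < y < x * r -> Xset h2 h1 y)) \/
    ((forall y, x / r < y < x -> Xset h2 h1 y) /\
     (forall y, x < y < x * r -> Xset h1 h2 y))).

From Stdlib Require Import Lra Psatz.

(* If h2 were affine near a boundary point x of X(h1,h2), then g := h1 - h2 would be
   convex near x and take both negative and nonnegative values arbitrarily close to x.
   A convex function stays negative on a neighbourhood of each point where it is
   negative, so g x >= 0; its negativity set is an interval, and beyond a point where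
   g >= 0 the function g is positive.  Hence g changes sign strictly at x, i.e. x is a
   simple crossing point.  Part (ii) is part (i) for (h2, h1), as C is symmetric. *)

Definition convex_on (g : R -> R) (l u : R) : Prop :=
  forall a b c, l < a -> a < b -> b < c -> c < u ->
    (c - a) * g b <= (c - b) * g a + (b - a) * g c.

Lemma convex_pos_convex_on (h : R -> R) (l u : R) :
  convex_pos h -> 0 <= l -> convex_on h l u.
Proof.
  intros Hh Hl a b c Ha Hab Hbc Hc.
  set (t := (c - b) / (c - a)).
  assert (E1t : 1 - t = (b - a) / (c - a)) by (unfold t; field; lra).
  assert (Ht : 0 <= t <= 1).
  { assert (0 < t) by (apply Rdiv_lt_0_compat; lra).
    assert (0 < (b - a) / (c - a)) by (apply Rdiv_lt_0_compat; lra).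
    lra. }
  pose proof (Hh a c t ltac:(lra) ltac:(lra) Ht) as H.
  replace (t * a + (1 - t) * c) with b in H by (rewrite E1t; unfold t; field; lra).
  apply (Rmult_le_compat_l (c - a)) in H; [|lra].
  replace ((c - a) * (t * h a + (1 - t) * h c))
    with ((c - b) * h a + (b - a) * h c) in H by (rewrite E1t; unfold t; field; lra).
  exact H.
Qed.

Lemma convex_on_sub_affine (g : R -> R) (l u m k : R) :
  convex_on g l u -> convex_on (fun y => g y - (m * y + k)) l u.
Proof.
  intros Hg a b c Ha Hab Hbc Hc.
  pose proof (Hg a b c Ha Hab Hbc Hc).
  enough (E : (c - a) * (g b - (m * b + k))
                - ((c - b) * (g a - (m * a + k)) + (b - a) * (g c - (m * c + k)))
              = (c - a) * g b - ((c - b) * g a + (b - a) * g c)) by lra.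
  ring.
Qed.

Lemma convex_on_reflect (g : R -> R) (l u : R) :
  convex_on g l u -> convex_on (fun y => g (- y)) (- u) (- l).
Proof.
  intros Hg a b c Ha Hab Hbc Hc.
  pose proof (Hg (- c) (- b) (- a) ltac:(lra) ltac:(lra) ltac:(lra) ltac:(lra)).
  lra.
Qed.

Section ConvexSign.

Variables (g : R -> R) (l u : R).
Hypothesis g_convex : convex_on g l u.

Lemma convex_on_neg_between (a b c : R) :
  l < a -> a < b -> b < c -> c < u -> g a < 0 -> g c < 0 -> g b < 0.
Proof.
  intros Ha Hab Hbc Hc Hga Hgc.
  pose proof (g_convex a b c Ha Hab Hbc Hc). nra.
Qed.

Lemma convex_on_pos_right (a b c : R) :
  l < a -> a < b -> b < c -> c < u -> g a < 0 -> 0 <= g b -> 0 < g c.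
Proof.
  intros Ha Hab Hbc Hc Hga Hgb.
  pose proof (g_convex a b c Ha Hab Hbc Hc). nra.
Qed.

Lemma convex_on_neg_right (x q : R) :
  l < x -> x < q -> q < u -> g x < 0 ->
  exists e, 0 < e /\ forall y, x <= y < x + e -> g y < 0.
Proof.
  intros Hx Hxq Hq Hgx.
  (* Up to x + e the chord from (x, g x) to (q, g q) stays below 0. *)
  set (D := Rabs (g q - g x) - g x).
  assert (HD : 0 < D) by (unfold D; pose proof (Rabs_pos (g q - g x)); lra).
  exists ((q - x) * (- g x) / D). split.
  { apply Rdiv_lt_0_compat; nra. }
  intros y [Hxy Hy].
  assert (HeD : ((q - x) * (- g x) / D) * D = (q - x) * (- g x)) by (field; lra).
  assert (He : (q - x) * (- g x) / D <= q - x).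
  { apply Rmult_le_reg_r with D; [lra|]. rewrite HeD.
    unfold D; pose proof (Rabs_pos (g q - g x)); nra. }
  destruct (Rle_lt_or_eq_dec x y Hxy) as [Hlt|<-]; [|exact Hgx].
  pose proof (g_convex x y q Hx Hlt ltac:(lra) Hq).
  pose proof (Rle_abs (g q - g x)).
  assert ((y - x) * D < (q - x) * (- g x)) by (rewrite <- HeD; nra).
  unfold D in *. nra.
Qed.

End ConvexSign.

Lemma convex_on_neg_nbhd (g : R -> R) (l u x : R) :
  convex_on g l u -> l < x < u -> g x < 0 ->
  exists e, 0 < e /\ forall y, x - e < y < x + e -> g y < 0.
Proof.
  intros Hg Hx Hgx.
  destruct (convex_on_neg_right g l u Hg x ((x + u) / 2) ltac:(lra) ltac:(lra) ltac:(lra) Hgx)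
    as [e1 [He1 Hright]].
  assert (Hgx' : g (- - x) < 0) by (rewrite Ropp_involutive; exact Hgx).
  destruct (convex_on_neg_right _ _ _ (convex_on_reflect g l u Hg) (- x) (- ((l + x) / 2))
              ltac:(lra) ltac:(lra) ltac:(lra) Hgx') as [e2 [He2 Hleft]].
  exists (Rmin e1 e2). split; [now apply Rmin_pos|].
  pose proof (Rmin_l e1 e2); pose proof (Rmin_r e1 e2).
  intros y Hy. destruct (Rle_or_lt x y).
  - apply Hright; lra.
  - rewrite <- (Ropp_involutive y). apply Hleft; lra.
Qed.

Definition adherent (P : R -> Prop) (x : R) : Prop :=
  forall e, 0 < e -> exists y, x - e < y < x + e /\ P y.

Lemma adherent_reflect (P : R -> Prop) (x : R) :
  adherent P x -> adherent (fun y => P (- y)) (- x).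
Proof.
  intros HP e He. destruct (HP e He) as [y [Hy Py]].
  exists (- y). rewrite Ropp_involutive. split; [lra | exact Py].
Qed.

Definition crosses_up (g : R -> R) (x e : R) : Prop :=
  (forall y, x - e < y < x -> g y < 0) /\ (forall y, x < y < x + e -> 0 < g y).

Definition crosses_down (g : R -> R) (x e : R) : Prop :=
  (forall y, x - e < y < x -> 0 < g y) /\ (forall y, x < y < x + e -> g y < 0).

Lemma crosses_up_reflect (g : R -> R) (x e : R) :
  crosses_up (fun y => g (- y)) (- x) e -> crosses_down g x e.
Proof.
  intros [Hl Hr]. split; intros y Hy; rewrite <- (Ropp_involutive y);
    [apply Hr | apply Hl]; lra.
Qed.

Lemma convex_on_crosses_up (g : R -> R) (l u x y0 : R) :
  convex_on g l u -> l < y0 < x -> x < u -> g y0 < 0 -> 0 <= g x ->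
  adherent (fun y => g y < 0) x -> exists e, 0 < e /\ crosses_up g x e.
Proof.
  intros Hg Hy0 Hu Hgy0 Hgx Hneg.
  assert (Hpos : forall y, x < y < u -> 0 < g y).
  { intros y Hy. exact (convex_on_pos_right g l u Hg y0 x y ltac:(lra) ltac:(lra) ltac:(lra) ltac:(lra) Hgy0 Hgx). }
  exists (Rmin (x - y0) (u - x)). split; [apply Rmin_pos; lra|].
  pose proof (Rmin_l (x - y0) (u - x)); pose proof (Rmin_r (x - y0) (u - x)).
  split; intros y Hy; [|apply Hpos; lra].
  destruct (Hneg (x - y) ltac:(lra)) as [y1 [Hy1 Hgy1]].
  destruct (Rtotal_order y1 x) as [Hlt|[->|Hgt]].
  - apply (convex_on_neg_between g l u Hg y0 y y1); lra.
  - lra.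
  - pose proof (Hpos y1 ltac:(lra)). lra.
Qed.

Lemma convex_on_sign_change (g : R -> R) (l u x : R) :
  convex_on g l u -> l < x < u ->
  adherent (fun y => g y < 0) x -> adherent (fun y => 0 <= g y) x ->
  exists e, 0 < e /\ (crosses_up g x e \/ crosses_down g x e).
Proof.
  intros Hg Hx Hneg Hnn.
  assert (Hgx : 0 <= g x).
  { destruct (Rlt_or_le (g x) 0) as [Hlt|]; [exfalso|assumption].
    destruct (convex_on_neg_nbhd g l u x Hg Hx Hlt) as [e [He Hnbhd]].
    destruct (Hnn e He) as [y [Hy Hgy]]. pose proof (Hnbhd y Hy). lra. }
  destruct (Hneg (Rmin (x - l) (u - x)) ltac:(apply Rmin_pos; lra)) as [y0 [Hy0 Hgy0]].
  pose proof (Rmin_l (x - l) (u - x)); pose proof (Rmin_r (x - l) (u - x)).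
  destruct (Rtotal_order y0 x) as [Hlt|[->|Hgt]].
  - destruct (convex_on_crosses_up g l u x y0 Hg ltac:(lra) ltac:(lra) Hgy0 Hgx Hneg)
      as [e [He Hup]].
    exists e. auto.
  - lra.
  - assert (Hgy0' : g (- - y0) < 0) by (rewrite Ropp_involutive; exact Hgy0).
    assert (Hgx' : 0 <= g (- - x)) by (rewrite Ropp_involutive; exact Hgx).
    destruct (convex_on_crosses_up _ _ _ (- x) (- y0) (convex_on_reflect g l u Hg)
                ltac:(lra) ltac:(lra) Hgy0' Hgx' (adherent_reflect _ x Hneg))
      as [e [He Hup]].
    exists e. split; [exact He|]. right. exact (crosses_up_reflect g x e Hup).
Qed.

Lemma ball_open (x d : R) : open_set (fun y => x - d < y < x + d).
Proof.
  intros y Hy.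
  assert (Hm : 0 < Rmin (y - (x - d)) (x + d - y)) by (apply Rmin_pos; lra).
  exists (mkposreal _ Hm). intros z Hz. unfold disc in Hz; simpl in Hz.
  apply Rabs_def2 in Hz.
  pose proof (Rmin_l (y - (x - d)) (x + d - y)); pose proof (Rmin_r (y - (x - d)) (x + d - y)).
  lra.
Qed.

Lemma boundary_pos_adherent (A : R -> Prop) (x : R) :
  boundary_pos A x -> adherent A x /\ adherent (fun y => ~ A y) x.
Proof.
  intros [_ Hbd]. split; intros e He;
    destruct (Hbd _ (ball_open x e) ltac:(lra)) as [[y [Hy [_ Ay]]] [z [Hz [_ Az]]]];
    eauto.
Qed.

Lemma adherent_near_iff (P Q : R -> Prop) (x d : R) :
  0 < d -> (forall y, x - d < y < x + d -> (P y <-> Q y)) -> adherent P x -> adherent Q x.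
Proof.
  intros Hd HPQ HP e He.
  pose proof (Rmin_l e d); pose proof (Rmin_r e d).
  destruct (HP (Rmin e d) ltac:(apply Rmin_pos; lra)) as [y [Hy Py]].
  exists y. split; [lra|]. apply (HPQ y); [lra | exact Py].
Qed.

Lemma Cset_intro (h1 h2 : R -> R) (x e : R) :
  0 < x -> 0 < e ->
  ((forall y, x - e < y < x -> Xset h1 h2 y) /\ (forall y, x < y < x + e -> Xset h2 h1 y)) \/
  ((forall y, x - e < y < x -> Xset h2 h1 y) /\ (forall y, x < y < x + e -> Xset h1 h2 y)) ->
  Cset h1 h2 x.
Proof.
  intros Hx He Hcross. split; [exact Hx|]. exists (1 + e / x).
  assert (0 < e / x) by (apply Rdiv_lt_0_compat; lra).
  assert (Hright : x * (1 + e / x) = x + e) by (field; lra).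
  assert (Hleft : x - e < x / (1 + e / x)).
  { replace (x / (1 + e / x)) with (x - e + e * e / (x + e)) by (field; lra).
    assert (0 < e * e / (x + e)) by (apply Rdiv_lt_0_compat; nra). lra. }
  rewrite Hright. split; [lra|].
  destruct Hcross as [[Hl Hr]|[Hl Hr]]; [left|right];
    split; intros y Hy; [apply Hl | apply Hr | apply Hl | apply Hr]; lra.
Qed.

Lemma Cset_sym (h1 h2 : R -> R) (x : R) : Cset h2 h1 x -> Cset h1 h2 x.
Proof.
  intros [Hx [r [Hr [[H1 H2]|[H1 H2]]]]]; split; auto; exists r; split; auto.
Qed.

Lemma boundary_not_Cset_supp (h1 h2 : R -> R) (x : R) :
  convex_pos h1 -> boundary_pos (Xset h1 h2) x -> ~ Cset h1 h2 x -> supp h2 x.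
Proof.
  intros Hh1 Hbd HnC. split; [exact (proj1 Hbd)|].
  intros U HU HUx [m [k Haff]]. apply HnC.
  destruct (HU x HUx) as [d0 Hd0].
  set (d := Rmin d0 x).
  assert (Hdd0 : d <= d0) by apply Rmin_l.
  assert (Hdx : d <= x) by apply Rmin_r.
  assert (Hd : 0 < d) by (apply Rmin_pos; [apply cond_pos | exact (proj1 Hbd)]).
  set (g := fun y => h1 y - (m * y + k)).
  assert (Hball : forall y, x - d < y < x + d ->
            (Xset h1 h2 y <-> g y < 0) /\ (Xset h2 h1 y <-> 0 < g y)).
  { intros y Hy.
    assert (Hy0 : 0 < y) by lra.
    assert (HUy : U y) by (apply Hd0; unfold disc; simpl; apply Rabs_def1; lra).
    unfold Xset, g. rewrite (Haff y (conj HUy Hy0)).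
    split; split; intros; try split; lra. }
  assert (Hg : convex_on g (x - d) (x + d))
    by (apply convex_on_sub_affine, convex_pos_convex_on; [exact Hh1 | lra]).
  destruct (boundary_pos_adherent _ x Hbd) as [Hin Hout].
  assert (Hneg : adherent (fun y => g y < 0) x).
  { apply (adherent_near_iff (Xset h1 h2) _ x d Hd); [|exact Hin].
    intros y Hy. apply (Hball y Hy). }
  assert (Hnn : adherent (fun y => 0 <= g y) x).
  { apply (adherent_near_iff (fun y => ~ Xset h1 h2 y) _ x d Hd); [|exact Hout].
    intros y Hy. destruct (Hball y Hy) as [HX _]. rewrite HX.
    split; [apply Rnot_lt_le | apply Rle_not_lt]. }
  destruct (convex_on_sign_change g (x - d) (x + d) x Hg ltac:(lra) Hneg Hnn)
    as [e [He Hcross]].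
  pose proof (Rmin_l e d); pose proof (Rmin_r e d).
  apply (Cset_intro h1 h2 x (Rmin e d)); [lra | apply Rmin_pos; lra|].
  destruct Hcross as [[Hl Hr]|[Hl Hr]]; [left|right]; split; intros y Hy;
    apply (Hball y ltac:(lra)); [apply Hl | apply Hr | apply Hl | apply Hr]; lra.
Qed.

Theorem proposition6p4 (h1 h2 : R -> R) :
  convex_pos h1 -> convex_pos h2 ->
  (forall x, boundary_pos (Xset h1 h2) x -> ~ Cset h1 h2 x -> supp h2 x) /\
  (forall x, boundary_pos (Xset h2 h1) x -> ~ Cset h1 h2 x -> supp h1 x).
Proof.
  intros Hh1 Hh2. split; intros x Hbd HnC.
  - exact (boundary_not_Cset_supp h1 h2 x Hh1 Hbd HnC).
  - exact (boundary_not_Cset_supp h2 h1 x Hh2 Hbd (fun HC => HnC (Cset_sym h1 h2 x HC))).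
Qed.
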